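(* Let $\mathbf{A}\in\mathbb{R}^{M\times N}$, $\mathbf{Y}\in\mathbb{R}^{M\times L}$, and let $(\mathbf{g}(t),\mathbf{V}(t))\in\mathbb{R}^N\times\mathbb{R}^{N\times L}$, $t\ge 0$, evolve under the continuous gradient flow of $\mathcal{L}(\mathbf{g},\mathbf{V})=\Vert\mathbf{Y}-\mathbf{A}((\mathbf{g}^{\odot 2}\mathbf{1}_L)\odot\mathbf{V})\Vert_F^2$. Then for every $t\ge0$: (1) (global balancedness) $\frac12\Vert\mathbf{g}(t)\Vert_2^2-\Vert\mathbf{V}(t)\Vert_F^2=\frac12\Vert\mathbf{g}(0)\Vert_2^2-\Vert\mathbf{V}(0)\Vert_F^2$; (2) (row-wise balancedness) for each $i\in[N]$, $\frac12 g_i^2(t)-\sum_{j\in[L]}V_{ij}^2(t)=\frac12 g_i^2(0)-\sum_{j\in[L]}V_{ij}^2(0)$.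
   Context: $\odot$ denotes the entrywise product, $\mathbf{g}^{\odot2}$ the entrywise square, $\mathbf{1}_L$ the $1\times L$ all-ones row vector, so the matrix $(\mathbf{g}^{\odot 2}\mathbf{1}_L)\odot\mathbf{V}$ has entries $g_i^2V_{ij}$. Gradient flow means $\frac{d}{dt}g_l(t)=-\frac{\partial\mathcal{L}}{\partial g_l}(\mathbf g(t),\mathbf V(t))$ and $\frac{d}{dt}V_{lm}(t)=-\frac{\partial\mathcal{L}}{\partial V_{lm}}(\mathbf g(t),\mathbf V(t))$ for all $l\in[N]$, $m\in[L]$. *)

From HB Require Import structures.
From mathcomp Require Import all_boot all_order all_algebra.
From mathcomp Require Import all_classical all_reals all_analysis.
Set Implicit Arguments. Unset Strict Implicit. Unset Printing Implicit Defensive.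
Import Order.TTheory GRing.Theory Num.Theory.
Import numFieldNormedType.Exports.
Local Open Scope classical_set_scope.
Local Open Scope ring_scope.

(* L(g,V) = || Y - A ((g^{.2} 1_L) .* V) ||_F^2, written out entrywise:
   ((g^{.2} 1_L) .* V)_{kj} = g_k^2 V_{kj}. *)
Definition loss (R : realType) (M N L : nat) (A : 'M[R]_(M, N)) (Y : 'M[R]_(M, L))
  (g : 'I_N -> R) (V : 'I_N -> 'I_L -> R) : R :=
  \sum_(m < M) \sum_(j < L)
     (Y m j - \sum_(k < N) A m k * (g k ^+ 2 * V k j)) ^+ 2.

Definition dL_dg (R : realType) (M N L : nat) (A : 'M[R]_(M, N)) (Y : 'M[R]_(M, L))
  (g : 'I_N -> R) (V : 'I_N -> 'I_L -> R) (l : 'I_N) : R :=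
  derive1 (fun s : R => loss A Y (fun k => if k == l then s else g k) V) (g l).

Definition dL_dV (R : realType) (M N L : nat) (A : 'M[R]_(M, N)) (Y : 'M[R]_(M, L))
  (g : 'I_N -> R) (V : 'I_N -> 'I_L -> R) (l : 'I_N) (m : 'I_L) : R :=
  derive1 (fun s : R => loss A Y g
      (fun k j => if (k == l) && (j == m) then s else V k j)) (V l m).

Definition gradient_flow (R : realType) (M N L : nat) (A : 'M[R]_(M, N))
  (Y : 'M[R]_(M, L)) (g : 'I_N -> R -> R) (V : 'I_N -> 'I_L -> R -> R) : Prop :=
  (forall l, {within `[0, +oo[, continuous (g l)}) /\
  (forall l m, {within `[0, +oo[, continuous (V l m)}) /\
  (forall t : R, 0 < t -> forall l,
     derivable (g l) t 1 /\
     derive1 (g l) t = - dL_dg A Y (fun k => g k t) (fun k j => V k j t) l) /\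
  (forall t : R, 0 < t -> forall l m,
     derivable (V l m) t 1 /\
     derive1 (V l m) t = - dL_dV A Y (fun k => g k t) (fun k j => V k j t) l m).

From HB Require Import structures.
From mathcomp Require Import all_boot all_order all_algebra.
From mathcomp Require Import all_classical all_reals all_analysis.
From mathcomp Require Import ring.
Import Order.TTheory GRing.Theory Num.Theory.
Import numFieldNormedType.Exports.
Local Open Scope classical_set_scope.
Local Open Scope ring_scope.
Set Implicit Arguments. Unset Strict Implicit.

(* The loss sees the i-th row only through the products g_i^2 V_ij, so it is
   invariant under g_i -> c g_i, V_i. -> c^-2 V_i.; differentiating at c = 1
   gives the Euler-type identity g_i dL/dg_i = 2 sum_j V_ij dL/dV_ij.  Along
   the flow this makes the derivative of 1/2 g_i^2 - sum_j V_ij^2 vanish for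
   t > 0, and continuity at t = 0 with the mean value theorem makes it
   constant on [0, +oo).  Summing over i gives the global identity. *)

Section real_calculus.
Variable R : realType.

Global Instance is_derive_sumr n (h : 'I_n -> R -> R) (x : R) (dh : 'I_n -> R) :
  (forall i, is_derive x 1 (h i) (dh i)) ->
  is_derive x 1 (fun s => \sum_(i < n) h i s) (\sum_(i < n) dh i).
Proof. by move=> hd; rewrite -fct_sumE; apply: is_derive_sum. Qed.

Lemma is_derive_if (b : bool) (c x : R) :
  is_derive x 1 (fun s : R => if b then s else c) b%:R.
Proof. by case: b; [apply: is_derive_id | apply: is_derive_cst]. Qed.

Lemma continuous_within_sqr (A : set R) (f : R -> R) :
  {within A, continuous f} -> {within A, continuous (fun s => f s ^+ 2)}.
Proof. by move=> fc s; apply: (continuousM (fc s) (fc s)). Qed.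

Lemma continuous_within_sumr (A : set R) n (h : 'I_n -> R -> R) :
  (forall i, {within A, continuous (h i)}) ->
  {within A, continuous (fun s => \sum_(i < n) h i s)}.
Proof.
move=> hc; apply: continuous_big => [[u v]|i _]; last exact: hc.
exact: (@add_continuous R^o).
Qed.

Lemma is_derive0_cst_itvy (f : R -> R) (a : R) :
  {within `[a, +oo[, continuous f} -> (forall x, a < x -> is_derive x 1 f 0) ->
  forall t, a <= t -> f t = f a.
Proof.
move=> fc fd t a_le_t.
have sub : `[a, t] `<=` `[a, +oo[.
  by move=> s; rewrite /= !in_itv /= => /andP[-> _].
have fd' x : x \in `]a, t[ -> is_derive x 1 f 0.
  by rewrite in_itv /= => /andP[ax _]; apply: fd.
have [c _] := MVT_segment a_le_t fd' (continuous_subspaceW sub fc).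
by rewrite mul0r => /eqP; rewrite subr_eq0 => /eqP.
Qed.

End real_calculus.

Section loss_gradient.
Variables (R : realType) (M N L : nat) (A : 'M[R]_(M, N)) (Y : 'M[R]_(M, L)).

Definition residual (g : 'I_N -> R) (V : 'I_N -> 'I_L -> R) m j :=
  Y m j - \sum_(k < N) A m k * (g k ^+ 2 * V k j).

Lemma is_derive_loss (g : 'I_N -> R -> R) (V : 'I_N -> 'I_L -> R -> R)
    (dg : 'I_N -> R) (dV : 'I_N -> 'I_L -> R) (x : R) :
  (forall k, is_derive x 1 (g k) (dg k)) ->
  (forall k j, is_derive x 1 (V k j) (dV k j)) ->
  is_derive x 1 (fun s => loss A Y (fun k => g k s) (fun k j => V k j s))
    (- \sum_(m < M) \sum_(j < L)
         2 * residual (fun k => g k x) (fun k j => V k j x) m j *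
         \sum_(k < N) A m k * (2 * g k x * dg k * V k j x + g k x ^+ 2 * dV k j)).
Proof.
move=> gd Vd; rewrite /loss; apply: is_derive_eq.
rewrite -sumrN; apply: eq_bigr => m _; rewrite -sumrN; apply: eq_bigr => j _.
rewrite /residual /GRing.scale /=.
rewrite [X in _ * - X](eq_bigr (fun k =>
  A m k * (2 * g k x * dg k * V k j x + g k x ^+ 2 * dV k j))); first by ring.
by move=> k _; ring.
Qed.

Lemma dL_dgE g V l : dL_dg A Y g V l =
  - \sum_(m < M) \sum_(j < L) 2 * residual g V m j * (A m l * (2 * g l * V l j)).
Proof.
have gd k := is_derive_if (k == l) (g k) (g l).
have Vd k j := is_derive_cst (V k j) (g l) 1.
have ld := is_derive_loss gd Vd; rewrite /dL_dg derive1E derive_val.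
have -> : (fun k => if k == l then g l else g k) = g.
  by apply/funext => k; case: eqP => [->|].
congr (- _); apply: eq_bigr => m _; apply: eq_bigr => j _; congr (_ * _).
rewrite (bigD1 l) //= eqxx big1 => [|k /negbTE kl]; first by rewrite /= addr0; ring.
by rewrite kl /=; ring.
Qed.

Lemma dL_dVE g V l p : dL_dV A Y g V l p =
  - \sum_(m < M) 2 * residual g V m p * (A m l * g l ^+ 2).
Proof.
have gd k := is_derive_cst (g k) (V l p) 1.
have Vd k j := is_derive_if ((k == l) && (j == p)) (V k j) (V l p).
have ld := is_derive_loss gd Vd; rewrite /dL_dV derive1E derive_val.
have -> : (fun k j => if (k == l) && (j == p) then V l p else V k j) = V.
  apply/funext => k; apply/funext => j.
  by case: (k =P l) => [->|]; case: (j =P p) => [->|].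
congr (- _); apply: eq_bigr => m _.
rewrite (bigD1 p) //= [X in _ + X]big1 ?addr0; last first.
  by move=> j /negbTE jp; rewrite big1 ?mulr0 // => k _; rewrite jp andbF /=; ring.
congr (_ * _).
rewrite (bigD1 l) //= !eqxx big1 => [|k /negbTE kl]; first by rewrite /= addr0; ring.
by rewrite kl /=; ring.
Qed.

Lemma dL_dg_balance g V l :
  g l * dL_dg A Y g V l = 2 * \sum_(j < L) V l j * dL_dV A Y g V l j.
Proof.
rewrite dL_dgE mulrN.
under [in RHS]eq_bigr => j _ do rewrite dL_dVE mulrN mulr_sumr.
rewrite sumrN mulrN exchange_big /= !mulr_sumr; congr (- _); apply: eq_bigr => m _.
by rewrite !mulr_sumr; apply: eq_bigr => j _; ring.
Qed.

End loss_gradient.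

Section balance_along_flow.
Variables (R : realType) (M N L : nat) (A : 'M[R]_(M, N)) (Y : 'M[R]_(M, L)).
Variables (g : 'I_N -> R -> R) (V : 'I_N -> 'I_L -> R -> R).
Hypothesis flow : gradient_flow A Y g V.

Definition row_balance i t := 2^-1 * g i t ^+ 2 - \sum_(j < L) V i j t ^+ 2.

Lemma is_derive_row_balance i (t : R) : 0 < t -> is_derive t 1 (row_balance i) 0.
Proof.
move=> t_gt0; have [_ [_ [gd Vd]]] := flow.
set gt := fun k => g k t; set Vt := fun k j => V k j t.
have gid : is_derive t 1 (g i) (- dL_dg A Y gt Vt i).
  by have [gi <-] := gd t t_gt0 i; rewrite derive1E; apply: derivableP.
have Vid j : is_derive t 1 (V i j) (- dL_dV A Y gt Vt i j).
  by have [Vij <-] := Vd t t_gt0 i j; rewrite derive1E; apply: derivableP.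
rewrite /row_balance; apply: is_derive_eq; rewrite /GRing.scale /=.
rewrite (eq_bigr (fun j => - (2 * (V i j t * dL_dV A Y gt Vt i j)))) => [|j _];
  last by ring.
by rewrite sumrN -mulr_sumr -dL_dg_balance /gt; field.
Qed.

Lemma continuous_row_balance i : {within `[0, +oo[, continuous (row_balance i)}.
Proof.
have [gc [Vc _]] := flow.
have gic := continuous_within_sqr (gc i).
have Vic := continuous_within_sumr (fun j => continuous_within_sqr (Vc i j)).
move=> s.
exact: (continuousB (continuousM (@cst_continuous _ R^o 2^-1 s) (gic s)) (Vic s)).
Qed.

Lemma row_balance_cst i t : 0 <= t -> row_balance i t = row_balance i 0.
Proof.
apply: is_derive0_cst_itvy; first exact: continuous_row_balance.
by move=> x; apply: is_derive_row_balance.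
Qed.

End balance_along_flow.

Theorem lemma5p1 (R : realType) (M N L : nat) (A : 'M[R]_(M, N)) (Y : 'M[R]_(M, L))
  (g : 'I_N -> R -> R) (V : 'I_N -> 'I_L -> R -> R) :
  gradient_flow A Y g V ->
  forall t : R, 0 <= t ->
    (2^-1 * \sum_(i < N) g i t ^+ 2 - \sum_(i < N) \sum_(j < L) V i j t ^+ 2
     = 2^-1 * \sum_(i < N) g i 0 ^+ 2 - \sum_(i < N) \sum_(j < L) V i j 0 ^+ 2)
    /\
    (forall i : 'I_N,
       2^-1 * g i t ^+ 2 - \sum_(j < L) V i j t ^+ 2
       = 2^-1 * g i 0 ^+ 2 - \sum_(j < L) V i j 0 ^+ 2).
Proof.
move=> flow t t_ge0.
have row i := row_balance_cst flow i t_ge0.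
split=> //; rewrite !mulr_sumr -!sumrB.
by apply: eq_bigr => i _; apply: row.
Qed.
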